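(* Consider a passive, minimal interconnected system $\Sigma_c=(A_c,B_c,C_c,D_c)$ consisting of $k$ passive, minimal subsystems $\Sigma_1,\dots,\Sigma_k$, a positive semi-definite interconnection matrix $S$ and an external input matrix $\mathcal{B}$. If $\Sigma_c$ is reduced to $\hat{\Sigma}_c$ using the Passive Interconnected Balanced Truncation (PIBT) algorithm described in the context, then the reduced subsystems $\hat{\Sigma}_j$, $j\in\{1,\dots,k\}$, and the reduced interconnected system $\hat{\Sigma}_c$ are passive.
   Context: A square, minimal system $\Sigma=(A,B,C,D)$, $\dot x=Ax+Bu$, $y=Cx+Du$, is passive iff there is $\Xi=\Xi^\top\succ0$ with $\begin{bmatrix}A^\top\Xi+\Xi A & \Xi B-C^\top\\ B^\top\Xi-C & -(D+D^\top)\end{bmatrix}\preceq0$ (positive real lemma). Subsystems $\Sigma_j=(A_j,B_j,C_j,D_j)$ with states $x_j\in\mathbb{R}^{n_j}$, inputs $v_j$ and outputs $z_j$ in $\mathbb{R}^{p_j}$ are passive and minimal. Their parallel composition is $\Sigma_b=(A_b,B_b,C_b,D_b)$ with $A_b=\mathrm{diag}(A_1,\dots,A_k)$ etc. and stacked states/inputs/outputs $x_b,v_b,z_b$. The interconnection is $v_b=-Sz_b+\mathcal{B}u_c$, $y_c=\mathcal{B}^\top z_b$ with $S\succeq0$ such that $I+SD_b$, $I+D_bS$ are nonsingular, giving $A_c=A_b-B_b\mathcal{D}_2SC_b$, $B_c=B_b\mathcal{D}_2\mathcal{B}$, $C_c=\mathcal{B}^\top\mathcal{D}_1C_b$, $D_c=\mathcal{B}^\top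 D_b\mathcal{D}_2\mathcal{B}$, $\mathcal{D}_1=(I+D_bS)^{-1}$, $\mathcal{D}_2=(I+SD_b)^{-1}$; $\Sigma_c$ is assumed asymptotically stable. It was shown earlier that such a negative feedback interconnection of a passive $\Sigma_b$ with $S\succeq0$ and $\mathcal{B}$ is passive. PIBT: (1) compute the controllability Gramian $P_c$ of $\Sigma_c$ from $0=A_cP_c+P_cA_c^\top+B_cB_c^\top$ and partition it into blocks $P_{i,j}\in\mathbb{R}^{n_i\times n_j}$ according to the subsystem states; (2) for each $j$ compute the (minimal) available storage $\Xi_j$ solving the positive real LMI above for $(A_j,B_j,C_j,D_j)$; (3) balance $\Sigma_j$ with input Gramian $X_i=P_{j,j}$ and output Gramian $X_o=\Xi_j$: Cholesky factors $X_i=R_i^\top R_i$, $X_o=R_o^\top R_o$, SVD $R_oR_i^\top=U\Gamma V$, $T=\Gamma^{-1/2}U^\top R_o$, $T^{-1}=R_i^\top V\Gamma^{-1/2}$, balanced realization $(TA_jT^{-1},TB_j,C_jT^{-1},D_j)$, for which the transformed Gramians both equal the diagonal sorted $\Gamma$; (4) partition the balanced realization as $\begin{bmatrix}\tilde A_{11}&\tilde A_{12}\\ \tilde A_{21}&\tilde A_{22}\end{bmatrix}$, $\begin{bmatrix}\tilde B_1\\ \tilde B_2\end{bmatrix}$, $[\tilde C_1\ \tilde C_2]$, with the first block corresponding to the largest diagonal entries of $\Gamma$, and keep $\hat{\Sigma}_j=(\tilde A_{11},\tilde B_1,\tilde C_1,D_j)$; (5) interconnect the $\hat{\Sigma}_j$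 with $S$ and $\mathcal{B}$ via the same formulas to obtain $\hat{\Sigma}_c$. *)

From HB Require Import structures.
From mathcomp Require Import all_boot all_order all_algebra.
From mathcomp Require Import complex.
Set Implicit Arguments. Unset Strict Implicit. Unset Printing Implicit Defensive.
Import Order.TTheory GRing.Theory Num.Theory.
Local Open Scope ring_scope.

Section Defs.
Variable R : rcfType.

Definition posdef n (X : 'M[R]_n) : Prop :=
  X^T = X /\ forall v : 'rV[R]_n, v != 0 -> 0 < (v *m X *m v^T) 0 0.
Definition psd n (X : 'M[R]_n) : Prop :=
  X^T = X /\ forall v : 'rV[R]_n, 0 <= (v *m X *m v^T) 0 0.
Definition nsd n (X : 'M[R]_n) : Prop := psd (- X).

Record sys (n p : nat) := Sys {
  sA : 'M[R]_n; sB : 'M[R]_(n, p); sC : 'M[R]_(p, n); sD : 'M[R]_p }.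

Definition prl_mx n p (s : sys n p) (Xi : 'M[R]_n) : 'M[R]_(n + p) :=
  block_mx ((sA s)^T *m Xi + Xi *m sA s) (Xi *m sB s - (sC s)^T)
           ((sB s)^T *m Xi - sC s) (- (sD s + (sD s)^T)).

(** Passivity, through the positive real lemma. *)
Definition passive n p (s : sys n p) : Prop :=
  exists Xi : 'M[R]_n, posdef Xi /\ nsd (prl_mx s Xi).

(** The (minimal) available storage: the least solution (Loewner order)
    of the positive real LMI. *)
Definition available_storage n p (s : sys n p) (Xi : 'M[R]_n) : Prop :=
  [/\ posdef Xi, nsd (prl_mx s Xi) &
      forall X : 'M[R]_n, posdef X -> nsd (prl_mx s X) -> psd (X - Xi)].

Definition controllable n p (A : 'M[R]_n) (B : 'M[R]_(n, p)) : Prop :=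
  \rank (\mxrow_(i < n) (A ^+ i *m B)) = n.
Definition minimal n p (s : sys n p) : Prop :=
  controllable (sA s) (sB s) /\ controllable (sA s)^T (sC s)^T.

Definition asymp_stable n p (s : sys n p) : Prop :=
  forall z : R[i], eigenvalue (map_mx (real_complex R) (sA s)) z ->
    complex.Re z < 0.

Definition bdiag k (n p : 'I_k -> nat) (M : forall j, 'M[R]_(n j, p j))
  : 'M[R]_(\sum_j n j, \sum_j p j) :=
  \mxblock_(i, j)
    (if i =P j is ReflectT e then castmx (erefl, congr1 p e) (M i) else 0).

Definition parallel k (n p : 'I_k -> nat) (s : forall j, sys (n j) (p j))
  : sys (\sum_j n j) (\sum_j p j) :=
  Sys (bdiag (fun j => sA (s j))) (bdiag (fun j => sB (s j)))
      (bdiag (fun j => sC (s j))) (bdiag (fun j => sD (s j))).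

(** Interconnection v_b = - S z_b + Bc u_c, y_c = Bc^T z_b. *)
Definition interconnect N P m (sb : sys N P) (S : 'M[R]_P) (Bc : 'M[R]_(P, m))
  : sys N m :=
  let D1 := invmx (1%:M + sD sb *m S) in
  let D2 := invmx (1%:M + S *m sD sb) in
  Sys (sA sb - sB sb *m D2 *m S *m sC sb) (sB sb *m D2 *m Bc)
      (Bc^T *m D1 *m sC sb) (Bc^T *m sD sb *m D2 *m Bc).

Definition cholesky n (X R0 : 'M[R]_n) : Prop :=
  [/\ X = R0^T *m R0, forall a b : 'I_n, (b < a)%N -> R0 a b = 0 &
      forall a : 'I_n, 0 < R0 a a].

Definition orthogonal n (U : 'M[R]_n) : Prop :=
  U^T *m U = 1%:M /\ U *m U^T = 1%:M.

Definition svd n (M U : 'M[R]_n) (g : 'rV[R]_n) (V : 'M[R]_n) : Prop :=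
  [/\ orthogonal U, orthogonal V, M = U *m diag_mx g *m V^T,
      forall a : 'I_n, 0 <= g 0 a &
      forall a b : 'I_n, (a <= b)%N -> g 0 b <= g 0 a].

Definition diag_isqrt n (g : 'rV[R]_n) : 'M[R]_n :=
  diag_mx (\row_a (Num.sqrt (g 0 a))^-1).

Definition balT n (Ro U : 'M[R]_n) (g : 'rV[R]_n) : 'M[R]_n :=
  diag_isqrt g *m U^T *m Ro.
Definition balTinv n (Ri V : 'M[R]_n) (g : 'rV[R]_n) : 'M[R]_n :=
  Ri^T *m V *m diag_isqrt g.

Definition balanced n p (s : sys n p) (T Tinv : 'M[R]_n) : sys n p :=
  Sys (T *m sA s *m Tinv) (T *m sB s) (sC s *m Tinv) (sD s).

Definition truncate n p r (h : (r <= n)%N) (s : sys n p) : sys r p :=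
  Sys (\matrix_(a < r, b < r) sA s (widen_ord h a) (widen_ord h b))
      (\matrix_(a < r, b < p) sB s (widen_ord h a) b)
      (\matrix_(a < p, b < r) sC s a (widen_ord h b))
      (sD s).

End Defs.

(* For a symmetric storage X the matrix of the positive real LMI is the
   symmetric part of N(X) = [X A, X B; -C, -D], so the LMI holds iff the
   quadratic form of N(X) is nonpositive.  Every step of PIBT acts on N by a congruence: a state
   transformation T replaces N(X) by L^T N(X) L with L = diag(T^-1, 1);
   truncating a diagonal storage keeps a principal block; the block-diagonal
   storage of a parallel composition adds the forms of the subsystems; and the
   feedback v = -S z + Bc u turns N into L^T N L - K^T S K with S >= 0.  The
   balancing transformation maps the available storage Xi_j = Ro^T Ro to the
   diagonal matrix Gamma_j, which is positive definite because the Cholesky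
   factors, hence Ro Ri^T, are invertible.  So the truncated Gamma_j are
   storages of the reduced subsystems and their block diagonal is a storage of
   the reduced interconnection. *)

From HB Require Import structures.
From mathcomp Require Import all_boot all_order all_algebra.
From mathcomp Require Import complex.
Import Order.TTheory GRing.Theory Num.Theory.
Local Open Scope ring_scope.

Section Passivity.
Variable R : rcfType.
Set Implicit Arguments. Unset Strict Implicit. Unset Printing Implicit Defensive.

Definition qform n (M : 'M[R]_n) (v : 'rV[R]_n) : R := (v *m M *m v^T) 0 0.

Lemma qform_tr n (M : 'M[R]_n) v : qform M^T v = qform M v.
Proof.
have trT : (v *m M *m v^T)^T = v *m M^T *m v^T by rewrite !trmx_mul trmxK mulmxA.
by rewrite /qform -trT mxE.
Qed.

Lemma qformD n (M N : 'M[R]_n) v : qform (M + N) v = qform M v + qform N v.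
Proof. by rewrite /qform mulmxDr mulmxDl mxE. Qed.

Lemma qformN n (M : 'M[R]_n) v : qform (- M) v = - qform M v.
Proof. by rewrite /qform mulmxN mulNmx mxE. Qed.

Lemma qform_congr a b (M : 'M[R]_a) (L : 'M[R]_(a, b)) v :
  qform (L^T *m M *m L) v = qform M (v *m L^T).
Proof. by rewrite /qform trmx_mul trmxK !mulmxA. Qed.

Lemma psd_qform n (Q : 'M[R]_n) v : psd Q -> 0 <= qform Q v.
Proof. by case=> _; apply. Qed.

Lemma nsd_symP n (M : 'M[R]_n) :
  nsd (M + M^T) <-> forall v, qform M v <= 0.
Proof.
have qform_sym v : qform (- (M + M^T)) v = - (qform M v *+ 2).
  by rewrite qformN qformD qform_tr.
split => [[_ nsdM] v | qM_le0].
  by have := nsdM v; rewrite -/(qform _ v) qform_sym oppr_ge0 pmulrn_lle0.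
split=> [|v]; first by rewrite linearN linearD /= trmxK addrC.
by rewrite -/(qform _ v) qform_sym oppr_ge0 mulrn_wle0.
Qed.

Lemma posdef_diag n (g : 'rV[R]_n) : (forall a, 0 < g 0 a) -> posdef (diag_mx g).
Proof.
move=> g_gt0; split=> [|v /eqP v_neq0]; first by rewrite tr_diag_mx.
have [a va_neq0] : exists a, v 0 a != 0.
  apply/existsP; apply: contraT; rewrite negb_exists => /forallP v0.
  by case: v_neq0; apply/matrixP => i j; rewrite (ord1 i) mxE; apply/eqP/negPn.
rewrite mul_mx_diag mxE (bigD1 a) //= !mxE ltr_wpDr //.
  by apply: sumr_ge0 => i _; rewrite !mxE mulrAC -expr2 mulr_ge0 ?sqr_ge0 ?ltW.
by rewrite mulrAC -expr2 mulr_gt0 // lt_def sqr_ge0 sqrf_eq0 va_neq0.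
Qed.

Section PositiveRealLemma.
Variables n p : nat.

Definition prl_half_mx (s : sys R n p) (X : 'M[R]_n) : 'M[R]_(n + p) :=
  block_mx (X *m sA s) (X *m sB s) (- sC s) (- sD s).

Lemma prl_mxE (s : sys R n p) X : X^T = X ->
  prl_mx s X = prl_half_mx s X + (prl_half_mx s X)^T.
Proof.
move=> X_sym; rewrite /prl_mx /prl_half_mx tr_block_mx add_block_mx.
rewrite !trmx_mul X_sym !linearN /= opprD.
by rewrite [_^T *m X + _]addrC [X *m sB s + _]addrC [- sC s + _]addrC.
Qed.

Lemma prl_nsdP (s : sys R n p) X : X^T = X ->
  nsd (prl_mx s X) <-> forall w, qform (prl_half_mx s X) w <= 0.
Proof. by move=> X_sym; rewrite prl_mxE //; apply: nsd_symP. Qed.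

Lemma prl_half_qform (s : sys R n p) X x u :
  qform (prl_half_mx s X) (row_mx x u) =
  ((x *m X *m sA s - u *m sC s) *m x^T + (x *m X *m sB s - u *m sD s) *m u^T) 0 0.
Proof.
by rewrite /qform /prl_half_mx mul_row_block tr_row_mx mul_row_col !mulmxN !mulmxA.
Qed.

End PositiveRealLemma.

Lemma prl_nsd_congr n p n' p' (s : sys R n p) (s' : sys R n' p') X Y L :
  X^T = X -> Y^T = Y -> prl_half_mx s' Y = L^T *m prl_half_mx s X *m L ->
  nsd (prl_mx s X) -> nsd (prl_mx s' Y).
Proof.
move=> X_sym Y_sym eN /prl_nsdP-/(_ X_sym) nsdX.
by apply/prl_nsdP => // w; rewrite eN qform_congr.
Qed.

Lemma balanced_nsd n p (s : sys R n p) X T Tinv :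
  Tinv *m T = 1%:M -> X^T = X -> nsd (prl_mx s X) ->
  nsd (prl_mx (balanced s T Tinv) (Tinv^T *m X *m Tinv)).
Proof.
move=> TinvK X_sym; apply: (prl_nsd_congr (L := block_mx Tinv 0 0 1%:M)) => //.
  by rewrite !trmx_mul trmxK X_sym mulmxA.
rewrite /prl_half_mx tr_block_mx !mulmx_block !trmx0 trmx1 /balanced /=.
rewrite !mul0mx !mulmx0 !mul1mx !mulmx1 !addr0 !add0r mulNmx.
by rewrite -!mulmxA !(mulmxA Tinv T) TinvK !mul1mx.
Qed.

Section Truncation.
Variables (n p r : nat) (h : (r <= n)%N).

Let sel : 'M[R]_(r, n) := rowsub (widen_ord h) 1%:M.

Let sel_mull q (M : 'M[R]_(n, q)) : sel *m M = rowsub (widen_ord h) M.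
Proof. by rewrite rowsubE. Qed.

Let sel_tr_mulr q (M : 'M[R]_(q, n)) : M *m sel^T = colsub (widen_ord h) M.
Proof.
have -> : sel^T = colsub (widen_ord h) 1%:M by apply/matrixP => i j; rewrite !mxE eq_sym.
by rewrite mulmx_colsub mulmx1.
Qed.

Lemma truncate_nsd (s : sys R n p) (g : 'rV[R]_n) :
  nsd (prl_mx s (diag_mx g)) ->
  nsd (prl_mx (truncate h s) (diag_mx (\row_a g 0 (widen_ord h a)))).
Proof.
apply: (prl_nsd_congr (L := block_mx sel^T 0 0 1%:M)); rewrite ?tr_diag_mx //.
rewrite /prl_half_mx tr_block_mx !mulmx_block !trmx0 trmx1 trmxK /truncate /=.
rewrite !mul0mx !mulmx0 !mul1mx !mulmx1 !addr0 !add0r mulNmx !sel_tr_mulr !sel_mull.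
by rewrite !mul_diag_mx; congr block_mx; apply/matrixP => a b; rewrite !mxE.
Qed.

End Truncation.

Lemma mul_mxrow_bdiag k (n p : 'I_k -> nat) q
    (M : forall j, 'M[R]_(n j, p j)) (c : forall j, 'M[R]_(q, n j)) :
  \mxrow_j c j *m bdiag M = \mxrow_j (c j *m M j).
Proof.
rewrite /bdiag mul_mxrow_mxblock; apply: eq_mxrow => j.
rewrite (bigD1 j) //= big1 => [|i /negPf ij]; last by case: eqP ij; rewrite ?mulmx0.
by case: eqP => // e; rewrite (eq_irrelevance e erefl) castmx_id addr0.
Qed.

Lemma parallel_nsd k (n p : 'I_k -> nat)
    (s : forall j, sys R (n j) (p j)) (X : forall j, 'M[R]_(n j)) :
  (forall j, (X j)^T = X j) -> (forall j, nsd (prl_mx (s j) (X j))) ->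
  nsd (prl_mx (parallel s) (\mxdiag_j X j)).
Proof.
move=> X_sym nsdX.
have Xb_sym : (\mxdiag_j X j)^T = \mxdiag_j X j by rewrite tr_mxdiag; apply: eq_mxdiag.
apply/prl_nsdP => // w; rewrite -[w]hsubmxK prl_half_qform /=.
rewrite -[lsubmx w]submxrowK -[rsubmx w]submxrowK mul_mxrow_mxdiag !mul_mxrow_bdiag.
rewrite -!mxrowB !tr_mxrow !mul_mxrow_mxcol -big_split summxE.
apply: sumr_le0 => j _; have /prl_nsdP := nsdX j.
move=> /(_ (X_sym j) (row_mx (submxrow (lsubmx w) j) (submxrow (rsubmx w) j))).
by rewrite prl_half_qform.
Qed.

Section Interconnection.
Variables (N P m : nat) (sb : sys R N P) (S : 'M[R]_P) (Bc : 'M[R]_(P, m)).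
Hypothesis S_psd : psd S.

Local Notation A := (sA sb).
Local Notation B := (sB sb).
Local Notation C := (sC sb).
Local Notation D := (sD sb).

(* z = K1 x + K2 u and v = F x + G u solve the loop z = C x + D v, v = - S z + Bc u. *)
Lemma prl_half_feedback X (F : 'M[R]_(P, N)) (G : 'M[R]_(P, m)) K1 K2 :
  K1 = C + D *m F -> K2 = D *m G -> F = - (S *m K1) -> G = Bc - S *m K2 ->
  prl_half_mx (Sys (A + B *m F) (B *m G) (Bc^T *m K1) (Bc^T *m K2)) X =
  (block_mx 1%:M 0 F G)^T *m prl_half_mx sb X *m block_mx 1%:M 0 F G
  - (row_mx K1 K2)^T *m S *m row_mx K1 K2.
Proof.
move=> eK1 eK2 eF eG; have [S_sym _] := S_psd.
have K1S : K1^T *m S = - F^T by rewrite -[S]S_sym -trmx_mul eF linearN opprK.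
have K2S : K2^T *m S = (Bc - G)^T by rewrite -[S]S_sym -trmx_mul eG opprB addrC subrK.
rewrite /prl_half_mx tr_block_mx !mulmx_block tr_row_mx mul_col_mx mul_col_row.
rewrite K1S K2S opp_block_mx add_block_mx /= !trmx0 trmx1 !mul0mx !mulmx0 !mul1mx !mulmx1.
rewrite linearB /= !mulmxBl !opprB !add0r; congr block_mx.
- rewrite eK1 !(mulmxDr, mulmxDl, mulmxN, mulNmx, opprK, mulmxA).
  by rewrite opprD !opprK addrACA !subrK.
- by rewrite eK2 !(mulmxDl, mulmxN, mulNmx, opprK, mulmxA) subrK.
- by rewrite [in G^T *m K1]eK1 mulmxDr !mulmxN !mulNmx mulmxA -opprD addKr.
- by rewrite [in G^T *m K2]eK2 mulmxN !mulNmx mulmxA addKr.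
Qed.

Hypotheses (DS_unit : (1%:M + D *m S) \in unitmx) (SD_unit : (1%:M + S *m D) \in unitmx).

Let D1 := invmx (1%:M + D *m S).
Let D2 := invmx (1%:M + S *m D).

Let push_through : D2 *m S = S *m D1.
Proof.
have eS : (1%:M + S *m D) *m S = S *m (1%:M + D *m S).
  by rewrite mulmxDl mulmxDr mul1mx mulmx1 mulmxA.
rewrite -[D2 *m S]mulmx1 -(mulmxV DS_unit) mulmxA -(mulmxA D2) -eS.
by rewrite mulmxA mulVmx // mul1mx.
Qed.

Let F := - (D2 *m S *m C).
Let G := D2 *m Bc.

Let D1C : D1 *m C = C + D *m F.
Proof.
have e : D1 *m C + D *m S *m D1 *m C = C.
  by rewrite -mulmxDl -{1}[D1]mul1mx -mulmxDl mulmxV // mul1mx.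
by apply/eqP; rewrite eq_sym /F mulmxN push_through !mulmxA subr_eq e.
Qed.

Lemma interconnect_nsd X : X^T = X ->
  nsd (prl_mx sb X) -> nsd (prl_mx (interconnect sb S Bc) X).
Proof.
move=> X_sym /prl_nsdP-/(_ X_sym) nsd_b; apply/prl_nsdP => // w.
have -> : interconnect sb S Bc =
    Sys (A + B *m F) (B *m G) (Bc^T *m (C + D *m F)) (Bc^T *m (D *m G)).
  by rewrite -D1C /F /G /interconnect /= mulmxN !mulmxA.
rewrite (prl_half_feedback _ (K1 := C + D *m F) (K2 := D *m G)) //.
- by rewrite qformD qformN !qform_congr subr_le0 (le_trans (nsd_b _)) ?psd_qform.
- by rewrite -D1C mulmxA -push_through.
- apply/eqP; rewrite eq_sym subr_eq /G !mulmxA.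
  by rewrite -{1}[D2]mul1mx -!mulmxDl mulmxV ?mul1mx.
Qed.

End Interconnection.

Section Balancing.
Variable n : nat.
Implicit Types (M Ri Ro U V : 'M[R]_n) (g : 'rV[R]_n).

Lemma cholesky_unitmx (X R0 : 'M[R]_n) : cholesky X R0 -> R0 \in unitmx.
Proof.
case=> _ R0_upper R0_diag; rewrite unitmxE -det_tr det_trig.
  by rewrite unitfE prodf_seq_neq0; apply/allP => a _; rewrite mxE lt0r_neq0.
by apply/is_trig_mxP => a b ab; rewrite mxE R0_upper.
Qed.

Lemma svd_unit_gt0 M U g V : M \in unitmx -> svd M U g V -> forall a, 0 < g 0 a.
Proof.
move=> M_unit [_ _ eM g_ge0 _] a; rewrite lt_def g_ge0 andbT.
apply: contraTneq M_unit => ga0; rewrite eM unitmxE !det_mulmx det_diag.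
by rewrite (bigD1 a) //= ga0 mul0r mulr0 mul0r unitr0.
Qed.

Lemma mul_diag_isqrt g (c : 'rV[R]_n) : (forall a, 0 <= g 0 a) ->
  diag_isqrt g *m diag_mx c *m diag_isqrt g = diag_mx (\row_a (c 0 a / g 0 a)).
Proof.
move=> g_ge0; apply/matrixP => a b; rewrite mul_mx_diag mul_diag_mx !mxE.
case: eqP => [->|_]; last by rewrite !mulr0n mulr0 mul0r.
by rewrite !mulr1n mulrAC -invfM -expr2 sqr_sqrtr // mulrC.
Qed.

Section Factors.
Variables (Ri Ro U V : 'M[R]_n) (g : 'rV[R]_n).
Hypothesis svd_RoRi : svd (Ro *m Ri^T) U g V.

Lemma balTinvK : (forall a, 0 < g 0 a) -> balTinv Ri V g *m balT Ro U g = 1%:M.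
Proof.
have [[UtU _] [VtV _] eM g_ge0 _] := svd_RoRi.
move=> g_gt0; apply: mulmx1C.
rewrite /balT /balTinv !mulmxA -(mulmxA _ Ro) eM !mulmxA -(mulmxA _ U^T) UtU mulmx1.
rewrite -(mulmxA _ V^T) VtV mulmx1 mul_diag_isqrt //.
by apply/matrixP => a b; rewrite !mxE divff ?lt0r_neq0.
Qed.

Lemma balTinv_storage :
  (balTinv Ri V g)^T *m (Ro^T *m Ro) *m balTinv Ri V g = diag_mx g.
Proof.
have [[UtU _] [VtV _] eM g_ge0 _] := svd_RoRi.
have eMt : Ri *m Ro^T = V *m diag_mx g *m U^T.
  by rewrite -[Ri]trmxK -trmx_mul eM !trmx_mul trmxK tr_diag_mx mulmxA.
rewrite /balTinv /diag_isqrt !trmx_mul trmxK tr_diag_mx -/(diag_isqrt g) !mulmxA.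
rewrite -(mulmxA _ Ri) eMt -(mulmxA _ Ro) eM !mulmxA -(mulmxA _ V^T V) VtV mulmx1.
rewrite -(mulmxA _ U^T U) UtU mulmx1 -(mulmxA _ V^T V) VtV mulmx1.
rewrite -(mulmxA _ (diag_mx g) (diag_mx g)) mulmx_diag mul_diag_isqrt //.
apply/matrixP => a b; rewrite !mxE.
by have [->|g_neq0] := eqVneq (g 0 a) 0; rewrite ?mul0r ?mulfK.
Qed.

End Factors.
End Balancing.

End Passivity.

Theorem theorem9 (R : rcfType) (k : nat) (n p : 'I_k -> nat) (m : nat)
  (sig : forall j : 'I_k, sys R (n j) (p j))
  (S : 'M[R]_(\sum_j p j)) (Bcal : 'M[R]_(\sum_j p j, m))
  (Pc : 'M[R]_(\sum_j n j))
  (Xi : forall j : 'I_k, 'M[R]_(n j))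
  (Ri Ro U V : forall j : 'I_k, 'M[R]_(n j))
  (g : forall j : 'I_k, 'rV[R]_(n j))
  (r : 'I_k -> nat) (hr : forall j : 'I_k, (r j <= n j)%N) :
  (forall j, passive (sig j) /\ minimal (sig j)) ->
  psd S ->
  (1%:M + sD (parallel sig) *m S) \in unitmx ->
  (1%:M + S *m sD (parallel sig)) \in unitmx ->
  let sigc := interconnect (parallel sig) S Bcal in
  passive sigc -> minimal sigc -> asymp_stable sigc ->
  (* step 1: controllability Gramian of Sigma_c *)
  0 = sA sigc *m Pc + Pc *m (sA sigc)^T + sB sigc *m (sB sigc)^T ->
  (* step 2: available storages *)
  (forall j, available_storage (sig j) (Xi j)) ->
  (* step 3: balancing of Sigma_j with X_i = P_{j,j}, X_o = Xi_j *)
  (forall j, cholesky (@submxblock R k k n n Pc j j) (Ri j)) ->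
  (forall j, cholesky (Xi j) (Ro j)) ->
  (forall j, svd (Ro j *m (Ri j)^T) (U j) (g j) (V j)) ->
  (* step 4: truncation to the leading r_j balanced states *)
  let sighat := fun j : 'I_k =>
    truncate (hr j) (balanced (sig j) (balT (Ro j) (U j) (g j))
                                      (balTinv (Ri j) (V j) (g j))) in
  (* step 5: reduced interconnection *)
  (forall j, passive (sighat j)) /\
  passive (interconnect (parallel sighat) S Bcal).
Proof.
move=> _ S_psd DS_unit SD_unit sigc _ _ _ _ storage chol_P chol_Xi svd_j sighat.
pose gr j := \row_a g j 0 (widen_ord (hr j) a).
have g_gt0 j : forall a, 0 < g j 0 a.
  apply: svd_unit_gt0 (svd_j j).
  rewrite unitmx_mul unitmx_tr.
  by rewrite (cholesky_unitmx (chol_P j)) (cholesky_unitmx (chol_Xi j)).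
have gr_gt0 j a : 0 < gr j 0 a by rewrite mxE.
have nsd_hat j : nsd (prl_mx (sighat j) (diag_mx (gr j))).
  have [[[Xi_sym _] nsd_Xi _] [eXi _ _]] := (storage j, chol_Xi j).
  apply: truncate_nsd; rewrite -(balTinv_storage (svd_j j)) -eXi.
  by apply: balanced_nsd; rewrite ?balTinvK.
split=> [j|]; first by exists (diag_mx (gr j)); split; [apply: posdef_diag|].
exists (diag_mx (\mxrow_j gr j)); split.
  by apply: posdef_diag => a; rewrite mxE.
apply: interconnect_nsd; rewrite ?tr_diag_mx ?diag_mxrow //.
by apply: parallel_nsd => j; rewrite ?tr_diag_mx.
Qed.
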